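(* Consider a single consensus instance with identifier $\mathsf{swid}$ run by a set of authorities satisfying the standing assumptions below. Let $P_1$ and $P_2$ be proposals for $\mathsf{swid}$ such that a commit certificate $C^* = \mathsf{cert}[\mathsf{Commit}(P_1)]$ and a pre-commit certificate $C_2 = \mathsf{cert}[\mathsf{PreCommit}(P_2)]$ both exist, and suppose $\mathsf{round}(P_2) \ge \mathsf{round}(P_1)$. Then $\mathsf{decision}(P_1) = \mathsf{decision}(P_2)$.
   Context: Setting. There is a fixed finite set of authorities, some of which are honest and the rest arbitrary (Byzantine). A \emph{quorum} is a set of authorities of a fixed size (e.g. $2f+1$ out of $n=3f+1$ with at most $f$ dishonest), such that any two quorums intersect in at least one honest authority. For a message $M$, a \emph{certificate} $\mathsf{cert}[M]$ exists only if every authority of some quorum has signed (voted for) $M$. Data. A decision value is either $\mathsf{Confirm}$ or $\mathsf{Abort}$. A \emph{proposal} is a message $P = \mathsf{Proposal}(\mathsf{swid}, k, V)$ with round number $k \in \mathbb{N}$ and decision value $V$; write $\mathsf{round}(P)=k$, $\mathsf{decision}(P)=V$. A \emph{pre-commit certificate} is $C=\mathsf{cert}[\mathsf{PreCommit}(P)]$ and a \emph{commit certificate} is $C^*=\mathsf{cert}[\mathsf{Commit}(P)]$; $\mathsf{round}$ and $\mathsf{decision}$ of such certificates are those of $P$. Honest behavior. Each honest authority $\alpha$ keeps, for the instance $\mathsf{swid}$, two fields $\mathsf{proposed}(\alpha)$ (initially $\bot$, later a proposal) and $\mathsf{locked}(\alpha)$ (initially $\bot$, later a pre-commit certificate), which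 change only as follows. (i) $\alpha$ signs $\mathsf{PreCommit}(P)$ only if at that moment $P$ is \emph{safe}: (a) if $\mathsf{proposed}(\alpha)=P_0\neq\bot$ and $P\ne P_0$ then $\mathsf{round}(P)>\mathsf{round}(P_0)$; and (b) if $\mathsf{locked}(\alpha)=C_0\neq\bot$ then $\mathsf{round}(P)>\mathsf{round}(C_0)$ and $\mathsf{decision}(P)=\mathsf{decision}(C_0)$; upon signing it sets $\mathsf{proposed}(\alpha):=P$. (ii) $\alpha$ signs $\mathsf{Commit}(P)$ only upon receiving a valid pre-commit certificate $C=\mathsf{cert}[\mathsf{PreCommit}(P)]$ that is \emph{safe} at that moment: (c) if $\mathsf{proposed}(\alpha)=P_0\neq\bot$ then $\mathsf{round}(C)\ge\mathsf{round}(P_0)$; and (d) if $\mathsf{locked}(\alpha)=C_0\neq\bot$ then $\mathsf{round}(C)\ge\mathsf{round}(C_0)$; upon signing it sets $\mathsf{locked}(\alpha):=C$. *)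

From mathcomp Require Import all_boot.
From Stdlib Require List.
Set Implicit Arguments. Unset Strict Implicit. Unset Printing Implicit Defensive.

Inductive dvalue := Confirm | Abort.

Record proposal := Proposal { swid : nat; round : nat; decision : dvalue }.

Inductive msg := PreCommit of proposal | Commit of proposal.

Section Protocol.
Variable A : finType.

(* An execution is the chronological list of signatures (signer, message).
   Signatures are unforgeable: (a, m) occurs iff authority a signed m. *)
Definition trace := seq (A * msg).

Definition signed (tr : trace) (a : A) (m : msg) : Prop := List.In (a, m) tr.

Definition cert_exists (quorum : {set A} -> Prop) (tr : trace) (m : msg) : Prop :=
  exists Q : {set A}, quorum Q /\ forall a, a \in Q -> signed tr a m.

Definition quorum_intersection (honest : A -> Prop) (quorum : {set A} -> Prop) : Prop :=
  forall Q1 Q2, quorum Q1 -> quorum Q2 ->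
    exists a, a \in Q1 /\ a \in Q2 /\ honest a.

(* Local state of authority a for instance s after a trace.
   proposed(a): the last proposal P for which a signed PreCommit(P).
   locked(a): the last pre-commit certificate C = cert[PreCommit P] upon which
   a signed Commit(P); it is represented by P (round/decision of C are those of P). *)
Definition step_proposed (a : A) (s : nat) (o : option proposal) (e : A * msg) :=
  match e with
  | (b, PreCommit P) => if (b == a) && (swid P == s) then Some P else o
  | _ => o
  end.

Definition step_locked (a : A) (s : nat) (o : option proposal) (e : A * msg) :=
  match e with
  | (b, Commit P) => if (b == a) && (swid P == s) then Some P else o
  | _ => o
  end.

Definition proposed (tr : trace) (a : A) (s : nat) : option proposal :=
  foldl (step_proposed a s) None tr.

Definition locked (tr : trace) (a : A) (s : nat) : option proposal :=
  foldl (step_locked a s) None tr.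

Definition safe_precommit (pre : trace) (a : A) (P : proposal) : Prop :=
  (forall P0, proposed pre a (swid P) = Some P0 -> P <> P0 -> round P0 < round P) /\
  (forall C0, locked pre a (swid P) = Some C0 ->
      round C0 < round P /\ decision P = decision C0).

(* Rule (ii): a valid certificate cert[PreCommit P] has been received
   (it exists in the history) and is safe. *)
Definition safe_commit (quorum : {set A} -> Prop) (pre : trace) (a : A)
    (P : proposal) : Prop :=
  cert_exists quorum pre (PreCommit P) /\
  (forall P0, proposed pre a (swid P) = Some P0 -> round P0 <= round P) /\
  (forall C0, locked pre a (swid P) = Some C0 -> round C0 <= round P).

Definition honest_step (quorum : {set A} -> Prop) (pre : trace) (a : A) (m : msg) : Prop :=
  match m with
  | PreCommit P => safe_precommit pre a P
  | Commit P => safe_commit quorum pre a P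
  end.

(* Valid execution: every signature by an honest authority obeys the rules
   w.r.t. the history before it; Byzantine authorities sign arbitrarily. *)
Definition valid_trace (honest : A -> Prop) (quorum : {set A} -> Prop) (tr : trace) : Prop :=
  forall i (a : A) (m : msg), List.nth_error tr i = Some (a, m) -> honest a ->
    honest_step quorum (take i tr) a m.

End Protocol.

(* Safety by strong induction on the round of the pre-committed proposal P2.
   An honest authority a lies in both the commit quorum of P1 and the
   pre-commit quorum of P2.  If a pre-committed P2 before committing P1, its
   proposed round already exceeded round P1 when it committed, which rule (c)
   forbids.  If it committed P1 first, from then on its lock was a
   certificate of round >= round P1, and rule (b) made it pre-commit P2 only
   with the decision of its current lock C, a pre-commit certificate with
   round P1 <= round C < round P2, to which the induction hypothesis applies.
   In equal rounds, two pre-commit certificates share an honest signer, who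
   never pre-commits two different proposals of the same round (rule (a)). *)
From Pilot Require Import Defs.
From mathcomp Require Import all_boot zify.
From Stdlib Require List.
Set Implicit Arguments. Unset Strict Implicit.

Lemma proposal_eq_dec (P P' : proposal) : {P = P'} + {P <> P'}.
Proof. by do 2 decide equality. Qed.

Lemma take_nth_error_succ (T : Type) (s : seq T) k :
  take k.+1 s = if List.nth_error s k is Some e then rcons (take k s) e else take k s.
Proof.
elim: s k => [|x s IH] [|k] //=; first by rewrite take0.
by rewrite IH; case: (List.nth_error s k).
Qed.

Lemma foldl_take_succ (T R : Type) (f : R -> T -> R) (r0 : R) (s : seq T) k :
  foldl f r0 (take k.+1 s) =
  if List.nth_error s k is Some e then f (foldl f r0 (take k s)) e
  else foldl f r0 (take k s).
Proof. by rewrite take_nth_error_succ; case: (List.nth_error s k) => // e; rewrite foldl_rcons. Qed.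

Lemma In_take (T : Type) (s : seq T) k x : List.In x (take k s) -> List.In x s.
Proof. by elim: s k => [|y s IH] [|k] //= [->|/IH]; [left | right]. Qed.

Definition advances (o o' : option proposal) : Prop :=
  match o, o' with
  | None, _ => True
  | Some _, None => False
  | Some P, Some P' => P = P' \/ round P < round P'
  end.

Definition round_le_opt (o o' : option proposal) : Prop :=
  match o, o' with
  | None, _ => True
  | Some _, None => False
  | Some P, Some P' => round P <= round P'
  end.

Lemma advances_refl : forall o, advances o o.
Proof. by case=> //= P; left. Qed.

Lemma advances_trans : forall o' o o'', advances o o' -> advances o' o'' -> advances o o''.
Proof.
case=> [P'|] [P|] [P''|] //= [<-|lt_PP'] // [<-|lt_P'P'']; by [left | right; lia].
Qed.

Lemma round_le_opt_refl : forall o, round_le_opt o o.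
Proof. by case=> /=. Qed.

Lemma round_le_opt_trans :
  forall o' o o'', round_le_opt o o' -> round_le_opt o' o'' -> round_le_opt o o''.
Proof. case=> [?|] [?|] [?|] //=; lia. Qed.

Lemma proposed_signed (A : finType) (tr : trace A) a P j :
  List.nth_error tr j = Some (a, PreCommit P) ->
  proposed (take j.+1 tr) a (swid P) = Some P.
Proof. by move=> e_j; rewrite /proposed foldl_take_succ e_j /= !eqxx. Qed.

Lemma locked_signed (A : finType) (tr : trace A) a P j :
  List.nth_error tr j = Some (a, Commit P) ->
  Defs.locked (take j.+1 tr) a (swid P) = Some P.
Proof. by move=> e_j; rewrite /Defs.locked foldl_take_succ e_j /= !eqxx. Qed.

Section HonestAuthorities.
Variables (A : finType) (honest : A -> Prop) (quorum : {set A} -> Prop).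
Hypothesis quorum_inter : quorum_intersection honest quorum.
Variable tr : trace A.
Hypothesis tr_valid : valid_trace honest quorum tr.

Lemma proposed_advances a s : honest a ->
  {homo (fun k => proposed (take k tr) a s) : i j / i <= j >-> advances i j}.
Proof.
move=> honest_a; apply: homo_leq; [exact: advances_refl | exact: advances_trans |].
move=> k; rewrite /proposed foldl_take_succ -/(proposed _ _ _).
case e_k: (List.nth_error tr k) => [[b [P|P]]|] /=; try exact: advances_refl.
case: eqP => [b_a|]; last by move=> _; apply: advances_refl.
case: eqP => [swid_P|]; last by move=> _; apply: advances_refl.
subst b s; case prop_k: (proposed (take k tr) a (swid P)) => [P0|] //=.
have [safeP _] := tr_valid e_k honest_a.
by case: (proposal_eq_dec P0 P) => [-> | /nesym neq_P]; [left | right; apply: safeP].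
Qed.

Lemma locked_round_mono a s : honest a ->
  {homo (fun k => Defs.locked (take k tr) a s) : i j / i <= j >-> round_le_opt i j}.
Proof.
move=> honest_a; apply: homo_leq; [exact: round_le_opt_refl | exact: round_le_opt_trans |].
move=> k; rewrite /Defs.locked foldl_take_succ -/(Defs.locked _ _ _).
case e_k: (List.nth_error tr k) => [[b [P|P]]|] /=; try exact: round_le_opt_refl.
case: eqP => [b_a|]; last by move=> _; apply: round_le_opt_refl.
case: eqP => [swid_P|]; last by move=> _; apply: round_le_opt_refl.
subst b s; case lock_k: (Defs.locked (take k tr) a (swid P)) => [C0|] //=.
by have [_ [_ safeP]] := tr_valid e_k honest_a; apply: safeP.
Qed.

Lemma honest_commit_cert a P i : honest a ->
  List.nth_error tr i = Some (a, Commit P) -> cert_exists quorum tr (PreCommit P).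
Proof.
move=> honest_a e_i; have [[Q [quorum_Q signed_Q]] _] := tr_valid e_i honest_a.
by exists Q; split=> // b /signed_Q; apply: In_take.
Qed.

Lemma locked_cert a s k C : honest a ->
  Defs.locked (take k tr) a s = Some C -> swid C = s /\ cert_exists quorum tr (PreCommit C).
Proof.
move=> honest_a; elim: k => [|k IH]; first by rewrite take0.
rewrite /Defs.locked foldl_take_succ -/(Defs.locked _ _ _).
case e_k: (List.nth_error tr k) => [[b [P|P]]|] //=.
case: eqP => [b_a|_]; last exact: IH.
case: eqP => [swid_P [<-]|_]; last exact: IH.
by subst b; split=> //; apply: honest_commit_cert e_k.
Qed.

Lemma certs_honest_signer m1 m2 :
  cert_exists quorum tr m1 -> cert_exists quorum tr m2 ->
  exists a i j, [/\ honest a, List.nth_error tr i = Some (a, m1)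
                            & List.nth_error tr j = Some (a, m2)].
Proof.
move=> [Q1 [quorum_Q1 signed_Q1]] [Q2 [quorum_Q2 signed_Q2]].
have [a [a_Q1 [a_Q2 honest_a]]] := quorum_inter quorum_Q1 quorum_Q2.
have [i e_i] := List.In_nth_error _ _ (signed_Q1 a a_Q1).
have [j e_j] := List.In_nth_error _ _ (signed_Q2 a a_Q2).
by exists a, i, j.
Qed.

Lemma honest_precommit_round_inj a P P' i j : honest a ->
  List.nth_error tr i = Some (a, PreCommit P) ->
  List.nth_error tr j = Some (a, PreCommit P') ->
  swid P = swid P' -> round P = round P' -> P = P'.
Proof.
move=> honest_a; wlog lt_ij : i j P P' / i < j.
  move=> wlog_ij e_i e_j swidE roundE; case: (ltngtP i j) => [lt_ij|lt_ji|eq_ij].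
  - exact: wlog_ij e_i e_j swidE roundE.
  - by symmetry; apply: wlog_ij e_j e_i _ _.
  - by move: e_i; rewrite eq_ij e_j => -[].
move=> e_i e_j swidE roundE.
have := proposed_advances (swid P) honest_a lt_ij; rewrite (proposed_signed e_i) swidE /=.
case prop_j: (proposed (take j tr) a (swid P')) => [P0|] //= adv.
have [safeP' _] := tr_valid e_j honest_a.
case: (proposal_eq_dec P' P0) => [eq_P'P0 | /(safeP' P0 prop_j) lt_P0P'].
  by subst P0; case: adv => // ?; lia.
by case: adv => [?|]; [subst P0 |]; lia.
Qed.

Lemma precommit_certs_round_inj P P' :
  cert_exists quorum tr (PreCommit P) -> cert_exists quorum tr (PreCommit P') ->
  swid P = swid P' -> round P = round P' -> P = P'.
Proof.
move=> /certs_honest_signer cert_P /cert_P [a [i [j [honest_a e_i e_j]]]].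
exact: honest_precommit_round_inj e_i e_j.
Qed.

(* Rule (c): committing P1 requires the proposed round to be at most round P1. *)
Lemma precommit_before_commit_round a P1 P2 i j : honest a ->
  List.nth_error tr j = Some (a, PreCommit P2) ->
  List.nth_error tr i = Some (a, Commit P1) ->
  j < i -> swid P1 = swid P2 -> round P2 <= round P1.
Proof.
move=> honest_a e_j e_i lt_ji swidE.
have := proposed_advances (swid P2) honest_a lt_ji; rewrite (proposed_signed e_j) -swidE /=.
case prop_i: (proposed (take i tr) a (swid P1)) => [P0|] //= adv.
have [_ [roundP _]] := tr_valid e_i honest_a.
by have := roundP P0 prop_i; case: adv => [<-|]; lia.
Qed.

Lemma commit_before_precommit_lock a P1 P2 i j : honest a ->
  List.nth_error tr i = Some (a, Commit P1) ->
  List.nth_error tr j = Some (a, PreCommit P2) ->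
  i < j -> swid P1 = swid P2 ->
  exists C, [/\ swid C = swid P1, cert_exists quorum tr (PreCommit C),
    round P1 <= round C < round P2 & decision P2 = decision C].
Proof.
move=> honest_a e_i e_j lt_ij swidE.
have := locked_round_mono (swid P1) honest_a lt_ij; rewrite (locked_signed e_i) /=.
case lock_j: (Defs.locked (take j tr) a (swid P1)) => [C|] //= le_P1C.
have [swidC certC] := locked_cert honest_a lock_j.
case: (tr_valid e_j honest_a) => _ /(_ C); rewrite -swidE => /(_ lock_j) [lt_CP2 decE].
by exists C; split=> //; apply/andP.
Qed.

Lemma commit_precommit_decision P1 P2 :
  cert_exists quorum tr (Commit P1) -> cert_exists quorum tr (PreCommit P2) ->
  swid P1 = swid P2 -> round P1 <= round P2 -> decision P1 = decision P2.
Proof.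
move=> cert_P1; have [n] := ubnP (round P2); elim: n P2 => // n IH P2 lt_P2n cert_P2 swidE.
have [a [i [j [honest_a e_i e_j]]]] := certs_honest_signer cert_P1 cert_P2.
rewrite leq_eqVlt => /orP[/eqP roundE | lt_P1P2].
  by rewrite (precommit_certs_round_inj (honest_commit_cert honest_a e_i) cert_P2 swidE roundE).
case: (ltngtP i j) => [lt_ij | lt_ji | eq_ij].
- have [C [swidC certC /andP[le_P1C lt_CP2] ->]] :=
    commit_before_precommit_lock honest_a e_i e_j lt_ij swidE.
  by apply: IH => //; lia.
- by have := precommit_before_commit_round honest_a e_j e_i lt_ji swidE; lia.
- by move: e_i; rewrite eq_ij e_j.
Qed.

End HonestAuthorities.

Theorem mainTheorem1 (A : finType) (honest : A -> Prop) (quorum : {set A} -> Prop)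
  (Hq : quorum_intersection honest quorum)
  (tr : trace A) (Hvalid : valid_trace honest quorum tr)
  (P1 P2 : proposal) (Hs : swid P1 = swid P2)
  (HC1 : cert_exists quorum tr (Commit P1))
  (HC2 : cert_exists quorum tr (PreCommit P2))
  (Hr : round P1 <= round P2) :
  decision P1 = decision P2.
Proof. exact: (commit_precommit_decision Hq Hvalid HC1 HC2 Hs Hr). Qed.
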